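(* Let $\mathcal{F}=\{S_1,\dots,S_m\}$ be a set system on a ground set $X$. Then there exist sets $C_1,\dots,C_m\in\mathcal{B}^2_2$ such that for every $I\subset[m]$ we have $\bigcap_{i\in I}S_i\neq\emptyset$ if and only if $\bigcap_{i\in I}C_i\neq\emptyset$.
   Context: For positive integers $k,d$, $\mathcal{B}^d_k$ denotes the collection of subsets of $\mathbb{R}^d$ that are solution sets of systems of polynomial inequalities (each strict or non-strict) in $d$ real variables with real polynomials of degree at most $k$. $[m]=\{1,\dots,m\}$. *)

From Stdlib Require Import Reals List.
Open Scope R_scope.

Record poly2_deg2 : Type := Poly2Deg2 {
  c0 : R; cx : R; cy : R; cxx : R; cxy : R; cyy : R }.

Definition eval_poly2 (p : poly2_deg2) (x y : R) : R :=
  c0 p + cx p * x + cy p * y + cxx p * x * x + cxy p * x * y + cyy p * y * y.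

(* A polynomial inequality: (p, true) means p(x,y) > 0 (strict),
   (p, false) means p(x,y) >= 0 (non-strict).  Inequalities with < or <=
   are covered by negating p. *)
Definition ineq2 := (poly2_deg2 * bool)%type.

Definition sat_ineq2 (c : ineq2) (x y : R) : Prop :=
  if snd c then 0 < eval_poly2 (fst c) x y else 0 <= eval_poly2 (fst c) x y.

Definition in_B22 (C : R -> R -> Prop) : Prop :=
  exists sys : list ineq2,
    forall x y, C x y <-> Forall (fun c => sat_ineq2 c x y) sys.

From Stdlib Require Import Reals List.
From Stdlib Require Import ClassicalEpsilon Lia Lra Psatz.
Open Scope R_scope.

(* Code each subfamily of S_1..S_m by a number k < 2^m through its binary digits,
   and let C_i be the union of the vertical lines x = k over the codes k that contain i
   and whose subfamily has a common point.  A common point of the C_i (i in I) lies on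
   a single line x = k, and k codes a superfamily of I with a common point.
   Such a finite union of lines is in B^2_2: the set {0, ..., N-1} is cut out of the
   real line by 0 <= x < N and the inequalities (x - k)(x - k - 1) >= 0, and a single
   value k is removed by (x - k)^2 > 0. *)

Lemma in_B22_ext (A B : R -> R -> Prop) :
  (forall x y, A x y <-> B x y) -> in_B22 A -> in_B22 B.
Proof.
  intros HAB [sys Hsys]. exists sys. intros x y. rewrite <- HAB. apply Hsys.
Qed.

Lemma in_B22_True : in_B22 (fun _ _ => True).
Proof. exists nil. intros x y. split; auto. Qed.

Lemma in_B22_and (A B : R -> R -> Prop) :
  in_B22 A -> in_B22 B -> in_B22 (fun x y => A x y /\ B x y).
Proof.
  intros [sA HA] [sB HB]. exists (sA ++ sB). intros x y.
  rewrite Forall_app, HA, HB. reflexivity.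
Qed.

Lemma in_B22_forall_In {T : Type} (l : list T) (A : T -> R -> R -> Prop) :
  (forall t, In t l -> in_B22 (A t)) ->
  in_B22 (fun x y => forall t, In t l -> A t x y).
Proof.
  induction l as [|t l IH]; intros HA.
  - apply (in_B22_ext (fun _ _ => True)); [|exact in_B22_True].
    intros x y. simpl. tauto.
  - apply (in_B22_ext (fun x y => A t x y /\ forall s, In s l -> A s x y)).
    + intros x y. simpl. split.
      * intros [Ht Hl] s [<-|Hs]; auto.
      * auto.
    + apply in_B22_and; [apply HA; left; reflexivity|].
      apply IH. intros s Hs. apply HA. right. exact Hs.
Qed.

Lemma in_B22_quadratic_x (A : R -> Prop) (a b c : R) (strict : bool) :
  (forall x, A x <-> if strict then 0 < a + b * x + c * x * x
                     else 0 <= a + b * x + c * x * x) ->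
  in_B22 (fun x _ => A x).
Proof.
  intros HA. exists ((Poly2Deg2 a b 0 c 0 0, strict) :: nil). intros x y.
  rewrite Forall_cons_iff, HA. unfold sat_ineq2, eval_poly2. simpl.
  replace (a + b * x + 0 * y + c * x * x + 0 * x * y + 0 * y * y)
    with (a + b * x + c * x * x) by ring.
  split; [intros H; split; [exact H | constructor] | intros [H _]; exact H].
Qed.

Lemma INR_consecutive_gap (j k : nat) :
  0 <= (INR k - INR j) * (INR k - INR j - 1).
Proof.
  destruct (Nat.lt_trichotomy k j) as [Hkj|[->|Hjk]].
  - assert (INR k + 1 <= INR j) by (rewrite <- S_INR; apply le_INR; lia). nra.
  - nra.
  - assert (INR j + 1 <= INR k) by (rewrite <- S_INR; apply le_INR; lia). nra.
Qed.

Lemma eq_INR_of_gaps (N : nat) (x : R) :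
  0 <= x -> x < INR N ->
  (forall k, (k < N)%nat -> 0 <= (x - INR k) * (x - INR k - 1)) ->
  exists k, (k < N)%nat /\ x = INR k.
Proof.
  induction N as [|N IH]; intros Hx0 HxN Hgap.
  - simpl in HxN. lra.
  - rewrite S_INR in HxN.
    destruct (Rlt_or_le x (INR N)) as [Hlt|Hge].
    + destruct IH as [k [Hk ->]]; auto.
      exists k. split; [lia | reflexivity].
    + exists N. split; [lia|].
      specialize (Hgap N (Nat.lt_succ_diag_r N)). nra.
Qed.

Lemma in_B22_INR_lines (N : nat) (g : nat -> Prop) :
  in_B22 (fun x _ => exists k, (k < N)%nat /\ x = INR k /\ g k).
Proof.
  apply (in_B22_ext (fun x y =>
    (0 <= x /\ 0 < INR N - x) /\
    (forall k, In k (seq 0 N) -> 0 <= (x - INR k) * (x - INR k - 1)) /\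
    (forall k, In k (seq 0 N) -> g k \/ x <> INR k))).
  - intros x y. split.
    + intros [[Hx0 HxN] [Hgap Hg]].
      destruct (eq_INR_of_gaps N x) as [k [Hk ->]]; try lra.
      { intros k Hk. apply Hgap, in_seq. lia. }
      exists k. split; [exact Hk|split; [reflexivity|]].
      destruct (Hg k) as [H|H]; [apply in_seq; lia | exact H | contradiction].
    + intros [k [Hk [-> Hgk]]]. split; [split|split].
      * apply pos_INR.
      * apply lt_INR in Hk. lra.
      * intros j _. apply INR_consecutive_gap.
      * intros j _. destruct (Nat.eq_dec j k) as [->|Hjk]; [left; exact Hgk|].
        right. intros Heq. apply Hjk, INR_eq. congruence.
  - apply in_B22_and; [apply in_B22_and|apply in_B22_and].
    + apply (in_B22_quadratic_x _ 0 1 0 false). intros x. lra.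
    + apply (in_B22_quadratic_x _ (INR N) (-1) 0 true). intros x. lra.
    + apply in_B22_forall_In. intros k _.
      apply (in_B22_quadratic_x _ (INR k * (INR k + 1)) (-(2 * INR k + 1)) 1 false).
      intros x. split; nra.
    + apply in_B22_forall_In. intros k _.
      destruct (excluded_middle_informative (g k)) as [Hg|Hg].
      * apply (in_B22_ext (fun _ _ => True)); [tauto | exact in_B22_True].
      * apply (in_B22_quadratic_x _ (INR k * INR k) (-(2 * INR k)) 1 true).
        intros x. split.
        -- intros [H|H]; [contradiction|]. assert (x - INR k <> 0) by lra.
           assert (0 < (x - INR k) * (x - INR k)) by nra. nra.
        -- intros H. right. intros ->. nra.
Qed.

Lemma exists_testbit_code (m : nat) (I : nat -> Prop) :
  exists k, (k < 2 ^ m)%nat /\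
    forall i, (i < m)%nat -> (Nat.testbit k i = true <-> I i).
Proof.
  revert I. induction m as [|m IH]; intros I.
  - exists 0%nat. split; [simpl; lia | intros i Hi; lia].
  - destruct (IH (fun j => I (S j))) as [k [Hk Hbits]].
    exists (2 * k + Nat.b2n (if excluded_middle_informative (I 0%nat) then true else false))%nat.
    split.
    + rewrite Nat.pow_succ_r'. destruct excluded_middle_informative; simpl; lia.
    + intros [|i] Hi.
      * rewrite Nat.testbit_0_r. destruct excluded_middle_informative; split; easy.
      * rewrite Nat.testbit_succ_r. apply Hbits. lia.
Qed.

Definition code_has_common_point {X : Type} (m : nat) (S : nat -> X -> Prop) (k : nat) :=
  exists x : X, forall i, (i < m)%nat -> Nat.testbit k i = true -> S i x.

(* Sets S_1..S_m are indexed by 0..m-1; I ranges over nonempty subsets of [m]. *)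
Theorem proposition1p7 (X : Type) (m : nat) (S : nat -> X -> Prop) :
  exists C : nat -> R -> R -> Prop,
    (forall i, (i < m)%nat -> in_B22 (C i)) /\
    (forall I : nat -> Prop,
        (forall i, I i -> (i < m)%nat) ->
        (exists i, I i) ->
        ((exists x : X, forall i, I i -> S i x) <->
         (exists p q : R, forall i, I i -> C i p q))).
Proof.
  exists (fun i p _ => exists k, (k < 2 ^ m)%nat /\ p = INR k /\
            (Nat.testbit k i = true /\ code_has_common_point m S k)).
  split.
  - intros i _. apply in_B22_INR_lines.
  - intros I HIm [i0 Hi0]. split.
    + intros [x Hx].
      destruct (exists_testbit_code m I) as [k [Hk Hbits]].
      exists (INR k), 0. intros i Hi. exists k.
      split; [exact Hk | split; [reflexivity | split]].
      * apply Hbits; auto.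
      * exists x. intros j Hj Hbit. apply Hx, Hbits; auto.
    + intros [p [q Hpq]].
      destruct (Hpq i0 Hi0) as [k [_ [-> [_ [x Hx]]]]].
      exists x. intros i Hi.
      destruct (Hpq i Hi) as [k' [_ [Hkk' [Hbit _]]]].
      apply INR_eq in Hkk' as <-.
      apply Hx; auto.
Qed.
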